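(* Let $K\ge 1$ and $d_0,d_1,\ldots,d_K\in\mathbb{N}$ with $d_0=n$. Let $\{(x^i,y^i): i\in[m]\}\subset\mathbb{R}^n\times\{0,1\}$ be a set of labeled training samples such that $\|x^i\|_2\le r$ for all $i\in[m]$, and let $\ell:\{0,1\}\times\mathbb{R}^{d_K}\to\mathbb{R}$ be a loss function. For $\lambda\in\mathbb{R}$ let $\sigma_\lambda:\mathbb{R}\to\{0,1\}$ be given by $\sigma_\lambda(\alpha)=0$ if $\alpha<\lambda$ and $\sigma_\lambda(\alpha)=1$ otherwise, applied componentwise to vectors. Consider the training problem $$\min \sum_{i=1}^m \ell(y^i,z^i)\quad\text{s.t.}\quad z^i=\sigma_{\lambda_K}\big(W^K\sigma_{\lambda_{K-1}}(W^{K-1}\cdots\sigma_{\lambda_1}(W^1x^i)\cdots)\big)\ \forall i\in[m],\quad W^k\in\mathbb{R}^{d_k\times d_{k-1}},\ \lambda_k\in\mathbb{R}\ \forall k\in[K].$$ Then this problem is equivalent to the mixed-integer nonlinear program $$\min \sum_{i=1}^m \ell(y^i,u^{i,K})$$ subject to $$W^1x^i< M_1u^{i,1}+\mathbf{1}\lambda_1,\qquad W^1x^i\ge M_1(u^{i,1}-\mathbf{1})+\mathbf{1}\lambda_1\qquad \forall i\in[m],$$ $$W^ku^{i,k-1}< M_ku^{i,k}+\mathbf{1}\lambda_k,\qquad W^ku^{i,k-1}\ge M_k(u^{i,k}-\mathbf{1})+\mathbf{1}\lambda_k\qquad \forall k\in[K]\setminus\{1\},\ i\in[m],$$ $$W^k\in[-1,1]^{d_k\times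 d_{k-1}},\ \lambda_k\in[-1,1]\quad\forall k\in[K],\qquad u^{i,k}\in\{0,1\}^{d_k}\quad\forall i\in[m],\ k\in[K],$$ where $M_1:=nr+1$, $M_k:=d_{k-1}+1$ for $k\ge2$, $\mathbf{1}$ denotes the all-ones vector, and the inequalities between vectors are componentwise (the variable $u^{i,K}$ plays the role of the network output $z^i$).
   Context: $[p]:=\{1,\ldots,p\}$ for $p\in\mathbb{N}$. The function $z\mapsto \sigma_{\lambda_K}(W^K\sigma_{\lambda_{K-1}}(\cdots\sigma_{\lambda_1}(W^1x)\cdots))$ is a neural network with binary threshold activation functions, weight matrices $W^k$ and learnable thresholds $\lambda_k$ (one scalar threshold per layer). *)

From HB Require Import structures.
From mathcomp Require Import all_boot all_order all_algebra.
From mathcomp Require Import reals.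
Set Implicit Arguments. Unset Strict Implicit. Unset Printing Implicit Defensive.
Import Order.TTheory GRing.Theory Num.Theory.
Local Open Scope ring_scope.

Definition norm2 {R : realType} {n : nat} (x : 'cV[R]_n) : R :=
  Num.sqrt (\sum_(j < n) x j 0 ^+ 2).

Definition sigma {R : realType} {p : nat} (lam : R) (v : 'cV[R]_p) : 'cV[R]_p :=
  \col_j (if v j 0 < lam then 0 else 1).

(* Layers are indexed 0..K-1 (layer k here = layer k+1 of the paper):
   W k : 'M_(d k.+1, d k), lam k : R.  Values for k >= K are irrelevant. *)
Fixpoint net {R : realType} (d : nat -> nat)
  (W : forall k : nat, 'M[R]_(d k.+1, d k)) (lam : nat -> R)
  (x : 'cV[R]_(d 0)) (k : nat) : 'cV[R]_(d k) :=
  match k with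
  | 0 => x
  | k'.+1 => sigma (lam k') (W k' *m net W lam x k')
  end.

(* Input of (0-based) layer k in the MINLP: x^i for k = 0, u^{i,k} otherwise
   (u k is the paper's u^{i,k+1}). *)
Definition layer_in {R : realType} (d : nat -> nat)
  (x : 'cV[R]_(d 0)) (u : forall k : nat, 'cV[R]_(d k.+1)) (k : nat)
  : 'cV[R]_(d k) :=
  match k with
  | 0 => x
  | k'.+1 => u k'
  end.

(* Big-M constant of (0-based) layer k: M_1 = n r + 1, M_{k+1} = d_k + 1. *)
Definition bigM {R : realType} (d : nat -> nat) (r : R) (k : nat) : R :=
  if k == 0%N then (d 0)%:R * r + 1 else (d k)%:R + 1.

Definition minlp_feasible {R : realType} (K m : nat) (d : nat -> nat) (r : R)
  (x : 'I_m -> 'cV[R]_(d 0))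
  (W : forall k : nat, 'M[R]_(d k.+1, d k)) (lam : nat -> R)
  (u : 'I_m -> forall k : nat, 'cV[R]_(d k.+1)) : Prop :=
  (forall (i : 'I_m) (k : nat), (k < K)%N -> forall j : 'I_(d k.+1),
      (W k *m layer_in (x i) (u i) k) j 0 < bigM d r k * u i k j 0 + lam k /\
      (W k *m layer_in (x i) (u i) k) j 0 >= bigM d r k * (u i k j 0 - 1) + lam k)
  /\ (forall k : nat, (k < K)%N ->
        (forall a b, -1 <= W k a b <= 1) /\ -1 <= lam k <= 1)
  /\ (forall (i : 'I_m) (k : nat), (k < K)%N -> forall j : 'I_(d k.+1),
        u i k j 0 = 0 \/ u i k j 0 = 1).

(** The threshold of a layer is unchanged when [W^k] and [lambda_k] are
    multiplied by the same positive constant, so every network can be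
    rescaled to have all weights and thresholds in [[-1/2, 1/2]].  For such
    a network every pre-activation [w] has [|w| <= (M_k - 1)/2], and then the
    big-M constraints are satisfied by the threshold output [u = sigma(w)].
    Conversely, a binary [u] satisfying the big-M constraints must equal the
    threshold output (whatever [M_k] is), so by induction over the layers
    every feasible point of the MINLP is the evaluation of a network. *)

From HB Require Import structures.
From mathcomp Require Import all_boot all_order all_algebra.
From mathcomp Require Import reals lra.
Import Order.TTheory GRing.Theory Num.Theory.
Set Implicit Arguments. Unset Strict Implicit. Unset Printing Implicit Defensive.
Local Open Scope ring_scope.

Section RealField.
Variable R : realFieldType.

Lemma threshold_bigM (D w l : R) :
  `|w| <= D / 2 -> `|l| <= 1 / 2 ->
  w < (D + 1) * (if w < l then 0 else 1) + l /\
  (D + 1) * ((if w < l then 0 else 1) - 1) + l <= w.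
Proof.
move=> /ler_normlP [wlo whi] /ler_normlP [llo lhi].
case: ifP => [wl | /negbT]; rewrite ?subrr ?sub0r ?mulr0 ?mulr1 ?mulrN1 ?add0r.
- by split; lra.
- by rewrite -leNgt; split; lra.
Qed.

Lemma normr_le_half_itv (z : R) : `|z| <= 1 / 2 -> -1 <= z <= 1.
Proof. by move=> /ler_normlP [zlo zhi]; apply/andP; split; lra. Qed.

Lemma bigM_threshold (M w l u : R) :
  u = 0 \/ u = 1 -> w < M * u + l -> M * (u - 1) + l <= w ->
  u = if w < l then 0 else 1.
Proof.
case=> ->; rewrite ?subrr mulr0 add0r; first by move=> ->.
by move=> _; rewrite leNgt => /negbTE ->.
Qed.

Lemma ler_sum_term (I : finType) (F : I -> R) (i : I) :
  (forall j, 0 <= F j) -> F i <= \sum_j F j.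
Proof. by move=> F_ge0; rewrite (bigD1 i) //= lerDl sumr_ge0. Qed.

Lemma ler_norm_entry_sum p q (A : 'M[R]_(p, q)) a b :
  `|A a b| <= \sum_a' \sum_b' `|A a' b'|.
Proof.
have row_le := ler_sum_term (F := fun b' => `|A a b'|) b (fun _ => normr_ge0 _).
apply: le_trans row_le _; apply: (ler_sum_term (F := fun a' => \sum_b' _)).
by move=> a'; exact: sumr_ge0.
Qed.

Lemma ler_norm_mulmx p q (A : 'M[R]_(p, q)) (v : 'cV[R]_q) (B : R) j :
  (forall a b, `|A a b| <= 1 / 2) -> (forall b, `|v b 0| <= B) ->
  `|(A *m v) j 0| <= q%:R * B / 2.
Proof.
move=> A_le v_le; rewrite mxE; apply: le_trans (ler_norm_sum _ _ _) _.
apply: le_trans (_ : \sum_(b < q) (1 / 2 * B) <= _).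
  by apply: ler_sum => b _; rewrite normrM ler_pM.
by rewrite sumr_const card_ord -mulr_natl; lra.
Qed.

End RealField.

Section Network.
Variable R : realType.

Lemma sigma_entry01 p (l : R) (v : 'cV[R]_p) j :
  sigma l v j 0 = 0 \/ sigma l v j 0 = 1.
Proof. by rewrite mxE; case: ifP; [left | right]. Qed.

Lemma ler_norm_entry_norm2 n (x : 'cV[R]_n) j : `|x j 0| <= norm2 x.
Proof.
rewrite /norm2 -sqrtr_sqr ler_wsqrtr //.
by apply: (ler_sum_term (F := fun b => x b 0 ^+ 2)) => b; exact: sqr_ge0.
Qed.

Lemma sigma_scale p q (c l : R) (A : 'M[R]_(p, q)) v : 0 < c ->
  sigma (l / c) ((c^-1 *: A) *m v) = sigma l (A *m v).
Proof.
move=> c_gt0; apply/matrixP => j k.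
by rewrite -scalemxAl !mxE [l / c]mulrC ltr_pM2l ?invr_gt0.
Qed.

Variable d : nat -> nat.
Implicit Types (W : forall k : nat, 'M[R]_(d k.+1, d k)) (lam : nat -> R).

Lemma net_scale W lam (c : nat -> R) x k : (forall k, 0 < c k) ->
  net (fun k => (c k)^-1 *: W k) (fun k => lam k / c k) x k = net W lam x k.
Proof. by move=> c_gt0; elim: k => //= k ->; rewrite sigma_scale. Qed.

Lemma net_normalize W lam :
  exists W' lam',
    [/\ forall k a b, `|W' k a b| <= 1 / 2,
        forall k, `|lam' k| <= 1 / 2 &
        forall x k, net W' lam' x k = net W lam x k].
Proof.
pose S k := \sum_a \sum_b `|W k a b|.
have S_ge0 k : 0 <= S k by apply: sumr_ge0 => a _; apply: sumr_ge0.
pose c k := 2 * (1 + S k + `|lam k|).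
have c_gt0 k : 0 < c k.
  by rewrite /c; have := S_ge0 k; have := normr_ge0 (lam k); lra.
have normV k : `|(c k)^-1| = (c k)^-1 by rewrite ger0_norm // invr_ge0 ltW.
exists (fun k => (c k)^-1 *: W k), (fun k => lam k / c k); split.
- move=> k a b; rewrite mxE normrM normV mulrC ler_pdivrMr // /c /S.
  by have := ler_norm_entry_sum (W k) a b; have := normr_ge0 (lam k); lra.
- move=> k; rewrite normrM normV ler_pdivrMr // /c.
  by have := S_ge0 k; lra.
- by move=> x k; exact: net_scale.
Qed.

Lemma layer_in_net W lam x k :
  layer_in x (fun k => net W lam x k.+1) k = net W lam x k.
Proof. by case: k. Qed.

Lemma net_minlp_feasible K m (r : R) (x : 'I_m -> 'cV[R]_(d 0)) W lam :
  (forall i, norm2 (x i) <= r) ->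
  (forall k a b, `|W k a b| <= 1 / 2) -> (forall k, `|lam k| <= 1 / 2) ->
  minlp_feasible K r x W lam (fun i k => net W lam (x i) k.+1).
Proof.
move=> x_le W_le lam_le; split; [|split].
- move=> i k _ j; rewrite layer_in_net /= ![sigma _ _ _ _]mxE /bigM.
  case: k j => [|k] j /=; apply: threshold_bigM (lam_le _).
  + apply: ler_norm_mulmx => [|b]; first exact: W_le.
    by apply: le_trans (x_le i); exact: ler_norm_entry_norm2.
  + rewrite -[X in X / 2]mulr1.
    apply: ler_norm_mulmx => [|b]; first exact: W_le.
    by case: (sigma_entry01 (lam k) (W k *m net W lam (x i) k) b) => ->;
       rewrite ?normr0 ?normr1.
- by move=> k _; split=> [a b|]; apply: normr_le_half_itv.
- by move=> i k _ j; exact: sigma_entry01.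
Qed.

Lemma minlp_feasible_net K m (r : R) (x : 'I_m -> 'cV[R]_(d 0)) W lam u :
  minlp_feasible K r x W lam u ->
  forall i k, (k <= K)%N -> layer_in (x i) (u i) k = net W lam (x i) k.
Proof.
move=> [bigM_ok [_ u01]] i; elim=> [//|k IH] kK.
rewrite /= -(IH (ltnW kK)); apply/matrixP => j z.
rewrite (ord1 z) [sigma _ _ _ _]mxE.
by have [lt ge] := bigM_ok i k kK j; exact: bigM_threshold (u01 i k kK j) lt ge.
Qed.

End Network.

Theorem lemma1 (R : realType) (K : nat) (d : nat -> nat) (m : nat) (r : R)
  (x : 'I_m -> 'cV[R]_(d 0)) (y : 'I_m -> bool)
  (ell : bool -> 'cV[R]_(d K) -> R) :
  (1 <= K)%N ->
  (forall i : 'I_m, norm2 (x i) <= r) ->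
  forall v : R,
    (exists (W : forall k : nat, 'M[R]_(d k.+1, d k)) (lam : nat -> R),
        v = \sum_(i < m) ell (y i) (net W lam (x i) K))
    <->
    (exists (W : forall k : nat, 'M[R]_(d k.+1, d k)) (lam : nat -> R)
            (u : 'I_m -> forall k : nat, 'cV[R]_(d k.+1)),
        @minlp_feasible R K m d r x W lam u /\
        v = \sum_(i < m) ell (y i) (layer_in (x i) (u i) K)).
Proof.
move=> _ x_le v; split.
- move=> [W [lam ->]].
  have [W' [lam' [W'_le lam'_le net'E]]] := net_normalize W lam.
  exists W', lam', (fun i k => net W' lam' (x i) k.+1); split.
    exact: net_minlp_feasible.
  by apply: eq_bigr => i _; rewrite layer_in_net net'E.
- move=> [W [lam [u [feas ->]]]]; exists W, lam.
  by apply: eq_bigr => i _; rewrite (minlp_feasible_net feas).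
Qed.
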